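(* Let $\Gamma=(V,E)$ be a reflexive, locally finite graph with $|V|\ge 2k-1$. Let $X$ be a $k$-fragment of $\Gamma$ and let $Y$ be a negative $k$-fragment (a $k$-fragment of $\Gamma^{-1}$) such that $|Y|\ge |X|$ and $|X\cap Y^{\curlyvee}|\ge k$. Then $X\cap Y^{\curlyvee}$ is a $k$-fragment of $\Gamma$. In particular, if $X$ is a $k$-atom, then $X\subseteq Y^{\curlyvee}$.
   Context: A graph is a pair $\Gamma=(V,E)$ with $E\subseteq V\times V$; reflexive means $(x,x)\in E$ for all $x$; locally finite means each $\Gamma(x)=\{y:(x,y)\in E\}$ is finite. For $A\subseteq V$: $\Gamma(A)=\bigcup_{x\in A}\Gamma(x)$, $\partial(A)=\Gamma(A)\setminus A$; $\Gamma^{-1}=(V,E^{-1})$, $E^{-1}=\{(x,y):(y,x)\in E\}$; $A^{\curlyvee}=V\setminus(A\cup\Gamma^{-1}(A))$. $\Gamma$ is $k$-separable if some finite $X$ has $|X|\ge k$ and $|V\setminus\Gamma(X)|\ge k$; then $\kappa_k(\Gamma)=\min\{|\partial(X)|: X\text{ finite}, |X|\ge k, |V\setminus\Gamma(X)|\ge k\}$, a $k$-fragment is a finite $X$ with $|X|\ge k$, $|V\setminus\Gamma(X)|\ge k$, $|\partial(X)|=\kappa_k(\Gamma)$, and a $k$-atom is a $k$-fragment of minimum cardinality. If $\Gamma$ is not $k$-separable and $|V|\ge 2k-1$, by convention $\kappa_k(\Gamma)=|V|-2k+1$ and every $k$-element subset is a $k$-fragment and a $k$-atom. Negative fragments/atoms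 are those of $\Gamma^{-1}$. *)

(* the vertex set may be infinite, so subsets are predicates
   V -> Prop and cardinalities are expressed with duplicate-free lists. *)
From Stdlib Require Import List Arith.
Import ListNotations.
Set Implicit Arguments.

Section Graphs.
Variable V : Type.

Definition reflexive (E : V -> V -> Prop) : Prop := forall x, E x x.

Definition finite (A : V -> Prop) : Prop :=
  exists l : list V, forall x, A x -> In x l.

Definition card_eq (A : V -> Prop) (n : nat) : Prop :=
  exists l : list V, NoDup l /\ length l = n /\ (forall x, A x <-> In x l).

Definition card_ge (A : V -> Prop) (k : nat) : Prop :=
  exists l : list V, NoDup l /\ length l = k /\ (forall x, In x l -> A x).

Definition locally_finite (E : V -> V -> Prop) : Prop :=
  forall x, finite (fun y => E x y).

Definition nbhd (E : V -> V -> Prop) (A : V -> Prop) : V -> Prop :=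
  fun y => exists x, A x /\ E x y.

Definition boundary (E : V -> V -> Prop) (A : V -> Prop) : V -> Prop :=
  fun y => nbhd E A y /\ ~ A y.

Definition inv (E : V -> V -> Prop) : V -> V -> Prop := fun x y => E y x.

Definition vee (E : V -> V -> Prop) (A : V -> Prop) : V -> Prop :=
  fun y => ~ A y /\ ~ nbhd (inv E) A y.

Definition inter (A B : V -> Prop) : V -> Prop := fun x => A x /\ B x.

Definition k_sep_set (E : V -> V -> Prop) (k : nat) (X : V -> Prop) : Prop :=
  finite X /\ card_ge X k /\ card_ge (fun y => ~ nbhd E X y) k.

Definition k_separable (E : V -> V -> Prop) (k : nat) : Prop :=
  exists X, k_sep_set E k X.

Definition kappa (E : V -> V -> Prop) (k c : nat) : Prop :=
  (k_separable E k /\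
     (exists X, k_sep_set E k X /\ card_eq (boundary E X) c) /\
     (forall X m, k_sep_set E k X -> card_eq (boundary E X) m -> c <= m))
  \/
  (~ k_separable E k /\
     exists n, card_eq (fun _ => True) n /\ 2 * k - 1 <= n /\ c = n - (2 * k - 1)).

Definition fragment (E : V -> V -> Prop) (k : nat) (X : V -> Prop) : Prop :=
  (k_separable E k /\ k_sep_set E k X /\
     exists c, kappa E k c /\ card_eq (boundary E X) c)
  \/
  (~ k_separable E k /\ card_ge (fun _ => True) (2 * k - 1) /\ card_eq X k).

Definition atom (E : V -> V -> Prop) (k : nat) (X : V -> Prop) : Prop :=
  fragment E k X /\
  exists n, card_eq X n /\
    (forall Y m, fragment E k Y -> card_eq Y m -> n <= m).

End Graphs.

(* Let Z = X ∩ Y^∨ and, symmetrically, W = Y ∩ X^∨' where ^∨' is taken in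
   the inverse graph.  The proof is a submodularity count.  Write
     p = |∂X ∩ Y|,  q = |∂X \ Y|,  r = |X ∩ ∂⁻Y|,  s = |∂⁻Y \ X|,
   so that |∂X| = p + q and |∂⁻Y| = r + s.  Every vertex of ∂Z lies in
   X ∩ ∂⁻Y or in ∂X \ Y, hence |∂Z| <= r + q, and dually |∂⁻W| <= p + s.
   Moreover X is partitioned into X ∩ Y, X ∩ ∂⁻Y and Z, and Y into Y ∩ X,
   Y ∩ ∂X and W, so |W| - |Z| = (|Y| - |X|) + (r - p).  If r <= p then
   |∂Z| <= |∂X| = κ_k, so Z is a fragment.  If p < r then |W| > |Z| >= k,
   so W is a negative k-separating set with |∂⁻W| < |∂⁻Y|, contradicting
   the minimality of ∂⁻Y.  When Γ or Γ⁻¹ is not k-separable the fragment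
   has exactly k elements, and Z = X.  Finally an atom X has no fragment
   of smaller size inside it, so X = Z ⊆ Y^∨. *)

From Stdlib Require Import List Arith ClassicalEpsilon Lia.
Set Implicit Arguments.

Section Cardinality.
Variable V : Type.

Definition decide (P : Prop) : bool :=
  if excluded_middle_informative P then true else false.

Lemma decide_spec (P : Prop) : decide P = true <-> P.
Proof.
  unfold decide; destruct (excluded_middle_informative P); split;
    intuition discriminate.
Qed.

Lemma card_eq_unique (A : V -> Prop) n m :
  card_eq A n -> card_eq A m -> n = m.
Proof.
  intros [l1 [N1 [L1 H1]]] [l2 [N2 [L2 H2]]]; subst.
  apply Nat.le_antisymm; apply NoDup_incl_length; auto;
    intros x Hx; [apply H2, H1 | apply H1, H2]; exact Hx.
Qed.

Lemma card_eq_ext {A B : V -> Prop} {n : nat} :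
  (forall x, A x <-> B x) -> card_eq A n -> card_eq B n.
Proof.
  intros AB [l [N [L H]]]; exists l; split; [exact N|]; split; [exact L|].
  intro x; rewrite <- AB; apply H.
Qed.

Lemma card_ge_mono {A B : V -> Prop} {k : nat} :
  card_ge A k -> (forall x, A x -> B x) -> card_ge B k.
Proof. intros [l [N [L H]]] AB; exists l; auto. Qed.

Lemma finite_sub {A B : V -> Prop} :
  finite B -> (forall x, A x -> B x) -> finite A.
Proof. intros [l H] AB; exists l; auto. Qed.

Lemma finite_union {A B : V -> Prop} :
  finite A -> finite B -> finite (fun x => A x \/ B x).
Proof.
  intros [l1 H1] [l2 H2]; exists (l1 ++ l2); intros x [Hx|Hx];
    apply in_or_app; auto.
Qed.

Lemma card_eq_finite {A : V -> Prop} {n : nat} : card_eq A n -> finite A.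
Proof. intros [l [_ [_ H]]]; exists l; intro x; apply H. Qed.

Lemma card_eq_filter (A P : V -> Prop) (l : list V) :
  NoDup l -> (forall x, A x <-> In x l) ->
  card_eq (fun x => A x /\ P x) (length (filter (fun x => decide (P x)) l)).
Proof.
  intros N H; exists (filter (fun x => decide (P x)) l).
  split; [apply NoDup_filter; exact N | split; [reflexivity |]].
  intro x; rewrite filter_In, decide_spec, <- H; tauto.
Qed.

Lemma finite_card_exists (A : V -> Prop) : finite A -> exists n, card_eq A n.
Proof.
  intros [l H].
  set (eq_dec := fun x y : V => excluded_middle_informative (x = y)).
  eexists; eapply card_eq_ext;
    [| exact (card_eq_filter (fun x => In x (nodup eq_dec l)) A
                (NoDup_nodup eq_dec l) (fun x => iff_refl _))].
  intro x; split; [intros [_ Ax]; exact Ax|]; intro Ax; split; auto.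
  apply nodup_In, H, Ax.
Qed.

(* The number of elements of a predicate (meaningful when it is finite). *)
Definition card (A : V -> Prop) : nat := epsilon (inhabits 0) (card_eq A).

Lemma card_spec {A : V -> Prop} : finite A -> card_eq A (card A).
Proof. intro F; unfold card; apply epsilon_spec, finite_card_exists, F. Qed.

Lemma card_of_card_eq {A : V -> Prop} {n : nat} : card_eq A n -> card A = n.
Proof.
  intro C; apply (card_eq_unique (card_spec (card_eq_finite C)) C).
Qed.

Lemma card_le {A B : V -> Prop} :
  finite B -> (forall x, A x -> B x) -> card A <= card B.
Proof.
  intros FB AB.
  destruct (card_spec (finite_sub FB AB)) as [l1 [N1 [L1 H1]]].
  destruct (card_spec FB) as [l2 [N2 [L2 H2]]].
  rewrite <- L1, <- L2; apply NoDup_incl_length; auto.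
  intros x Hx; apply H2, AB, H1, Hx.
Qed.

Lemma card_ext {A B : V -> Prop} :
  finite A -> (forall x, A x <-> B x) -> card A = card B.
Proof.
  intros FA AB; assert (FB : finite B) by (apply (finite_sub FA); apply AB).
  apply Nat.le_antisymm; apply card_le; auto; apply AB.
Qed.

Lemma card_le_full {A B : V -> Prop} :
  finite B -> (forall x, A x -> B x) -> card B <= card A ->
  forall x, B x -> A x.
Proof.
  intros FB AB Hle.
  destruct (card_spec (finite_sub FB AB)) as [l1 [N1 [L1 H1]]].
  destruct (card_spec FB) as [l2 [N2 [L2 H2]]].
  intros x Bx; apply H1.
  apply (NoDup_length_incl (l' := l2) N1); [lia | | apply H2, Bx].
  intros y Hy; apply H2, AB, H1, Hy.
Qed.

Lemma card_split {A : V -> Prop} (P : V -> Prop) :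
  finite A ->
  card A = card (fun x => A x /\ P x) + card (fun x => A x /\ ~ P x).
Proof.
  intro FA; destruct (card_spec FA) as [l [N [L H]]].
  assert (Cout : card_eq (fun x => A x /\ ~ P x)
                   (length (filter (fun x => negb (decide (P x))) l))).
  { exists (filter (fun x => negb (decide (P x))) l).
    split; [apply NoDup_filter; exact N | split; [reflexivity |]].
    intro x; rewrite filter_In, Bool.negb_true_iff, <- Bool.not_true_iff_false,
      decide_spec, <- H; tauto. }
  rewrite (card_of_card_eq (card_eq_filter A P N H)), (card_of_card_eq Cout).
  rewrite <- L; symmetry; apply filter_length.
Qed.

Lemma card_le_union {A B C : V -> Prop} :
  finite A -> finite B -> (forall x, C x -> A x \/ B x) ->
  card C <= card A + card B.
Proof.
  intros FA FB CAB.
  pose proof (finite_union FA FB) as FAB.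
  rewrite (card_le FAB CAB), (card_split A FAB).
  apply Nat.add_le_mono; apply card_le; auto; tauto.
Qed.

Lemma card_ge_le {A : V -> Prop} {k : nat} :
  card_ge A k -> finite A -> k <= card A.
Proof.
  intros [l1 [N1 [L1 H1]]] FA; destruct (card_spec FA) as [l2 [N2 [L2 H2]]].
  rewrite <- L1, <- L2; apply NoDup_incl_length; auto.
  intros x Hx; apply H2, H1, Hx.
Qed.

Lemma card_ge_of_le {A : V -> Prop} {k : nat} :
  finite A -> k <= card A -> card_ge A k.
Proof.
  intros FA Hk; destruct (card_spec FA) as [l [N [L H]]].
  exists (firstn k l).
  pose proof (firstn_skipn k l) as Hsplit.
  split; [apply (NoDup_app_remove_r _ (skipn k l)); rewrite Hsplit; exact N|].
  split; [apply firstn_length_le; lia|].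
  intros x Hx; apply H; rewrite <- Hsplit; apply in_or_app; auto.
Qed.

End Cardinality.

Section Crossing.
Variable V : Type.
Implicit Types (E : V -> V -> Prop) (A B : V -> Prop).

(* A vertex of A lies in B, in the in-boundary ∂⁻B, or in B^∨; hence
   |A| = |A ∩ B| + |∂⁻B ∩ A| + |A ∩ B^∨|. *)
Lemma card_vee_partition E {A} B :
  finite A ->
  card A = card (inter A B) + card (fun x => boundary (inv E) B x /\ A x)
           + card (inter A (vee E B)).
Proof.
  intro FA.
  assert (FAB : finite (fun x => A x /\ ~ B x)) by (apply (finite_sub FA); tauto).
  rewrite (card_split B FA), (card_split (nbhd (inv E) B) FAB), Nat.add_assoc.
  unfold inter, boundary, vee; f_equal; [f_equal |]; try reflexivity;
    apply card_ext; try (apply (finite_sub FA)); tauto.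
Qed.

(* The boundary of A ∩ B^∨ lies in (∂⁻B ∩ A) ∪ (∂A \ B): an out-neighbour
   of A ∩ B^∨ is never in B, and if it is in A it must be an in-neighbour
   of B. *)
Lemma boundary_inter_vee E A B y :
  boundary E (inter A (vee E B)) y ->
  (boundary (inv E) B y /\ A y) \/ (boundary E A y /\ ~ B y).
Proof.
  intros [[x [[Ax [Bx NBx]] Exy]] NZy].
  assert (NBy : ~ B y) by (intro By; apply NBx; exists y; split; auto).
  destruct (classic (A y)) as [Ay | NAy].
  - left; split; [|exact Ay]; split; [|exact NBy].
    apply NNPP; intro NN; apply NZy; repeat split; auto.
  - right; repeat split; auto; exists x; split; auto.
Qed.

Lemma card_boundary_inter_vee {E A} B :
  finite A -> finite (boundary E A) ->
  finite (boundary E (inter A (vee E B))) /\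
  card (boundary E (inter A (vee E B)))
    <= card (fun y => boundary (inv E) B y /\ A y)
       + card (fun y => boundary E A y /\ ~ B y).
Proof.
  intros FA FbA.
  assert (F1 : finite (fun y => boundary (inv E) B y /\ A y))
    by (apply (finite_sub FA); tauto).
  assert (F2 : finite (fun y => boundary E A y /\ ~ B y))
    by (apply (finite_sub FbA); tauto).
  split.
  - apply (finite_sub (finite_union F1 F2)), boundary_inter_vee.
  - apply card_le_union; auto; apply boundary_inter_vee.
Qed.

Lemma k_sep_set_sub {E k A B} :
  k_sep_set E k A -> (forall x, B x -> A x) -> card_ge B k -> k_sep_set E k B.
Proof.
  intros [FA [_ Gout]] BA GB; split; [exact (finite_sub FA BA)|]; split; auto.
  apply (card_ge_mono Gout); intros y NA [x [Bx Exy]]; apply NA.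
  exists x; auto.
Qed.

Definition min_sep_set E k A : Prop :=
  k_sep_set E k A /\ finite (boundary E A) /\
  forall B, k_sep_set E k B -> finite (boundary E B) ->
    card (boundary E A) <= card (boundary E B).

Lemma fragment_cases {E k A} :
  fragment E k A -> min_sep_set E k A \/ card_eq A k.
Proof.
  intros [[S [KA [c [Kc Cc]]]] | [_ [_ Ck]]]; [left | right; exact Ck].
  destruct Kc as [[_ [_ Min]] | [NS _]]; [|contradiction].
  split; [exact KA|]; split; [exact (card_eq_finite Cc)|].
  intros B KB FbB; rewrite (card_of_card_eq Cc).
  exact (Min B _ KB (card_spec FbB)).
Qed.

Lemma fragment_of_min_sep {E k A B} :
  min_sep_set E k A -> k_sep_set E k B -> finite (boundary E B) ->
  card (boundary E B) <= card (boundary E A) -> fragment E k B.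
Proof.
  intros [KA [FbA Min]] KB FbB Hle.
  left; split; [exists B; exact KB|]; split; [exact KB|].
  exists (card (boundary E A)); split.
  - left; split; [exists A; exact KA|]; split.
    + exists A; split; [exact KA | apply card_spec, FbA].
    + intros C m KC Cm; rewrite <- (card_of_card_eq Cm).
      exact (Min C KC (card_eq_finite Cm)).
  - replace (card (boundary E A)) with (card (boundary E B))
      by (apply Nat.le_antisymm; [exact Hle | exact (Min B KB FbB)]).
    apply card_spec, FbB.
Qed.

Lemma fragment_ext {E k A B} :
  (forall x, A x <-> B x) -> fragment E k A -> fragment E k B.
Proof.
  intros AB FA.
  assert (NB : forall y, nbhd E A y <-> nbhd E B y)
    by (intro y; unfold nbhd; firstorder).
  assert (BD : forall y, boundary E A y <-> boundary E B y)
    by (intro y; unfold boundary; rewrite NB, AB; tauto).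
  assert (KS : k_sep_set E k A -> k_sep_set E k B).
  { intros [[l Hl] [G1 G2]]; split; [exists l; firstorder|]; split.
    - apply (card_ge_mono G1); firstorder.
    - apply (card_ge_mono G2); intros y H1 H2; apply H1, NB, H2. }
  destruct FA as [[S [K [c [Kc Cc]]]] | [NS [G Ck]]].
  - left; split; [exact S|]; split; [exact (KS K)|].
    exists c; split; [exact Kc | exact (card_eq_ext BD Cc)].
  - right; split; [exact NS|]; split; [exact G | exact (card_eq_ext AB Ck)].
Qed.

Lemma crossing_fragment {E k X Y} :
  min_sep_set E k X -> min_sep_set (inv E) k Y ->
  card X <= card Y -> card_ge (inter X (vee E Y)) k ->
  fragment E k (inter X (vee E Y)).
Proof.
  intros SX SY HXY GZ.
  pose proof SX as [KX [FbX _]]; pose proof SY as [KY [FbY MinY]].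
  pose proof (proj1 KX) as FX; pose proof (proj1 KY) as FY.
  set (Z := inter X (vee E Y)); set (W := inter Y (vee (inv E) X)).
  set (p := card (fun y => boundary E X y /\ Y y)).
  set (q := card (fun y => boundary E X y /\ ~ Y y)).
  set (r := card (fun y => boundary (inv E) Y y /\ X y)).
  set (s := card (fun y => boundary (inv E) Y y /\ ~ X y)).
  pose proof (card_split Y FbX) as HbX; pose proof (card_split X FbY) as HbY.
  fold p q in HbX; fold r s in HbY.
  destruct (card_boundary_inter_vee Y FX FbX) as [FbZ HbZ]; fold Z r q in HbZ.
  destruct (card_boundary_inter_vee X FY FbY) as [FbW HbW]; fold W s in HbW.
  change (card (fun y => boundary (inv (inv E)) X y /\ Y y)) with p in HbW.
  assert (ZX : forall x, Z x -> X x) by (intros x []; auto).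
  assert (KZ : k_sep_set E k Z) by exact (k_sep_set_sub KX ZX GZ).
  destruct (Nat.le_gt_cases r p) as [Hrp | Hpr].
  - apply (fragment_of_min_sep SX KZ FbZ); lia.
  - (* Then |W| > |Z| >= k, and W would beat the minimal negative boundary. *)
    exfalso.
    assert (Hmeet : card (inter X Y) = card (inter Y X)).
    { apply card_ext; [apply (finite_sub FX); intros x [] |]; unfold inter; tauto. }
    pose proof (card_vee_partition E Y FX) as PX; fold r Z in PX.
    pose proof (card_vee_partition (inv E) X FY) as PY; fold W in PY.
    change (card (fun y => boundary (inv (inv E)) X y /\ Y y)) with p in PY.
    assert (HZ : k <= card Z)
      by (apply card_ge_le; [exact GZ | exact (finite_sub FX ZX)]).
    assert (KW : k_sep_set (inv E) k W).
    { apply (k_sep_set_sub KY); [intros x []; auto|].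
      apply card_ge_of_le; [apply (finite_sub FY); intros x []; auto | lia]. }
    pose proof (MinY W KW FbW); lia.
Qed.

End Crossing.

Theorem mainTheorem5 (V : Type) (E : V -> V -> Prop) (k : nat)
  (X Y : V -> Prop)
  (hk : 1 <= k)
  (hrefl : reflexive E) (hlf : locally_finite E)
  (hV : card_ge (fun _ : V => True) (2 * k - 1))
  (hX : fragment E k X) (hY : fragment (inv E) k Y)
  (hXY : exists nx ny, card_eq X nx /\ card_eq Y ny /\ nx <= ny)
  (hI : card_ge (inter X (vee E Y)) k) :
  fragment E k (inter X (vee E Y)) /\
  (atom E k X -> forall x, X x -> vee E Y x).
Proof.
  destruct hXY as [nx [ny [CX [CY Hle]]]].
  pose proof (card_eq_finite CX) as FX.
  assert (ZX : forall x, inter X (vee E Y) x -> X x) by (intros x []; auto).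
  assert (HZ : k <= card (inter X (vee E Y)))
    by (apply card_ge_le; [exact hI | apply (finite_sub FX ZX)]).
  rewrite <- (card_of_card_eq CX), <- (card_of_card_eq CY) in Hle.
  (* When |X| <= k, the intersection (of size >= k) is X itself. *)
  assert (Small : card X <= k -> fragment E k (inter X (vee E Y))).
  { intro HXk; apply (fragment_ext (A := X)); [|exact hX].
    intro x; split; [apply (card_le_full FX ZX); lia | apply ZX]. }
  assert (FZ : fragment E k (inter X (vee E Y))).
  { destruct (fragment_cases hX) as [SX | CXk];
      [| apply Small; rewrite (card_of_card_eq CXk); lia].
    destruct (fragment_cases hY) as [SY | CYk];
      [| apply Small; rewrite (card_of_card_eq CYk) in Hle; lia].
    exact (crossing_fragment SX SY Hle hI). }
  split; [exact FZ|].
  (* An atom has no smaller fragment inside it, so X = X ∩ Y^∨. *)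
  intros [_ [n [Cn Minimal]]] x Xx.
  pose proof (Minimal _ _ FZ (card_spec (finite_sub FX ZX))) as Hmin.
  rewrite <- (card_of_card_eq Cn) in Hmin.
  apply (card_le_full FX ZX Hmin x Xx).
Qed.
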